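(* Let $X=\{a,\dots,b\}\subseteq\mathbb{N}$, let $f^p:\mathcal{P}^n\to X$ be a generalized median voter scheme with monotonic family of fixed ballots $p=\{p_S\}_{S\subseteq N}$, and let $i\in N$. (i) If $p_{N\setminus\{i\}}\le p_{\{i\}}$, then $x\in V_i$ if and only if $x<p_{N\setminus\{i\}}$ or $x>p_{\{i\}}$. (ii) If $p_{\{i\}}<p_{N\setminus\{i\}}$, then $V_i=X$.
   Context: $N=\{1,\dots,n\}$, $n\ge2$; $X=\{a,a+1,\dots,b\}$, $|X|\ge2$; $\mathcal{P}$ all strict linear orders on $X$; $t(P_i)$ the top of $P_i$. A monotonic family of fixed ballots: $p_S\in X$ for all $S\subseteq N$, $p_N=a$, $p_\emptyset=b$, and $T\subseteq Q$ implies $p_Q\le p_T$. $f^p(P)=\min_{S\subseteq N}\max_{j\in S}\{t(P_j),p_S\}$. Option set $O(P_i)=\{f^p(P_i,P_{-i}):P_{-i}\in\mathcal{P}^{n-1}\}$. Agent $i$ vetoes $x$ via $P_i$ if $x\notin O(P_i)$; $V_i$ is the set of alternatives $i$ vetoes via some preference. *)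

From mathcomp Require Import all_boot.
Set Implicit Arguments. Unset Strict Implicit. Unset Printing Implicit Defensive.

(* Agents N = {1,...,n} are encoded as 'I_n.
   Alternatives X = {a,...,b} are encoded as alt a b := 'I_(b - a).+1,
   the ordinal k standing for the natural number a + k (order-preserving). *)
Definition alt (a b : nat) : finType := 'I_(b - a).+1.
Definition altv (a b : nat) (x : alt a b) : nat := a + nat_of_ord x.

Definition strict_linear (T : finType) (R : rel T) : Prop :=
  [/\ forall x, ~~ R x x,
      forall x y z, R x y -> R y z -> R x z
    & forall x y, x != y -> R x y || R y x].

Definition top (a b : nat) (P : rel (alt a b)) : alt a b :=
  odflt ord0 [pick x | [forall y, (y != x) ==> P x y]].

Definition monotonic_ballots (n a b : nat) (p : {set 'I_n} -> nat) : Prop :=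
  [/\ forall S, a <= p S <= b,
      p setT = a,
      p set0 = b
    & forall S Q : {set 'I_n}, S \subset Q -> p Q <= p S].

Definition gmvs (n a b : nat) (p : {set 'I_n} -> nat)
    (P : 'I_n -> rel (alt a b)) : nat :=
  \big[minn/b]_(S : {set 'I_n})
     maxn (p S) (\max_(j in S) altv (top (P j))).

Definition option_set (n a b : nat) (p : {set 'I_n} -> nat) (i : 'I_n)
    (Pi : rel (alt a b)) (x : alt a b) : Prop :=
  exists Pm : 'I_n -> rel (alt a b),
    (forall j, j != i -> strict_linear (Pm j)) /\
    gmvs p (fun j => if j == i then Pi else Pm j) = altv x.

Definition vetoed (n a b : nat) (p : {set 'I_n} -> nat) (i : 'I_n)
    (x : alt a b) : Prop :=
  exists Pi : rel (alt a b), strict_linear Pi /\ ~ option_set p i Pi x.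

From mathcomp Require Import all_boot all_order.
Import Order.TTheory.

Set Implicit Arguments.
Unset Strict Implicit.
Unset Printing Implicit Defensive.

(* Whatever agent i reports, once its top t is fixed the outcome lies between
   min(p_{N\i}, t) and max(p_{i}, t): the coalition {i} caps it and every
   coalition missing i is bounded below by p_{N\i}. With top b agent i thus
   excludes every x < p_{N\i}, and with top a every x > p_{i}. Conversely, if
   all the others put x on top with p_{N\i} <= x <= p_{i}, the outcome is x
   whatever i reports. So V_i is the complement of the interval
   [p_{N\i}, p_{i}] for every monotonic family, and part (ii) is the case
   where this interval is empty. *)

Section TopPreference.
Variable T : finType.

Definition top_rank (x y : T) : nat := if y == x then 0 else (enum_rank y).+1.

Definition top_pref (x : T) : rel T := [rel y z | top_rank x y < top_rank x z].

Lemma top_rank_inj x : injective (top_rank x).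
Proof.
move=> y z; rewrite /top_rank.
by case: eqP => [->|_]; case: eqP => [->|_] // [/val_inj/enum_rank_inj].
Qed.

Lemma top_pref_strict_linear x : strict_linear (top_pref x).
Proof.
split=> [y|y z w|y z]; rewrite /top_pref /= ?ltnn //; first exact: ltn_trans.
by rewrite -neq_ltn; apply: contra => /eqP/top_rank_inj->.
Qed.

Lemma top_pref_top x y : y != x -> top_pref x x y.
Proof. by rewrite /top_pref /top_rank /= eqxx => /negbTE->. Qed.

End TopPreference.

Lemma top_eq (a b : nat) (P : rel (alt a b)) x :
  strict_linear P -> (forall y, y != x -> P x y) -> top P = x.
Proof.
case=> irrP trP _ Px; rewrite /top; case: pickP => [z /forallP Pz | /(_ x)] /=.
- case: (eqVneq z x) => // zx.
  have Pzx : P z x by apply: implyP (Pz x) _; rewrite eq_sym.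
  by have := irrP z; rewrite (trP _ _ _ Pzx (Px z zx)).
- by have -> : [forall y, (y != x) ==> P x y] by apply/forallP => y; apply/implyP/Px.
Qed.

Lemma top_top_pref (a b : nat) (x : alt a b) : top (top_pref x) = x.
Proof. by apply: top_eq; [exact: top_pref_strict_linear | exact: top_pref_top]. Qed.

Lemma altv_le (a b : nat) (x : alt a b) : a <= b -> altv x <= b.
Proof. by move=> le_ab; rewrite /altv -leq_subRL // -ltnS. Qed.

Lemma altv_ord0 (a b : nat) : altv (ord0 : alt a b) = a.
Proof. exact: addn0. Qed.

Lemma altv_ord_max (a b : nat) : a <= b -> altv (ord_max : alt a b) = b.
Proof. exact: subnKC. Qed.

Lemma bigminn_le (I : finType) (F : I -> nat) c j : \big[minn/c]_i F i <= F j.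
Proof. by rewrite -minEnat -leEnat; apply: bigmin_le. Qed.

Lemma bigminn_geP (I : finType) (F : I -> nat) c m :
  reflect (m <= c /\ forall i, m <= F i) (m <= \big[minn/c]_i F i).
Proof.
rewrite -minEnat -leEnat.
by apply: (iffP (bigmin_geP _ _ _ _)) => [[? /(_ _ isT)] | [? ?]].
Qed.

Section VetoSet.
Variables (n a b : nat) (p : {set 'I_n} -> nat) (i : 'I_n).
Hypothesis p_mono : monotonic_ballots a b p.

Let p_le_b S : p S <= b. Proof. by case: p_mono => /(_ S)/andP[]. Qed.
Let a_le_p S : a <= p S. Proof. by case: p_mono => /(_ S)/andP[]. Qed.
Let p_anti (S Q : {set 'I_n}) : S \subset Q -> p Q <= p S.
Proof. by case: p_mono => _ _ _; apply. Qed.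
Let a_le_b : a <= b. Proof. exact: leq_trans (a_le_p set0) (p_le_b set0). Qed.

Lemma gmvs_le_max_top (Q : 'I_n -> rel (alt a b)) :
  gmvs p Q <= maxn (p [set i]) (altv (top (Q i))).
Proof.
apply: leq_trans (bigminn_le _ _ [set i]) _.
rewrite geq_max leq_maxl; apply/bigmax_leqP => j; rewrite inE => /eqP->.
exact: leq_maxr.
Qed.

Lemma min_top_le_gmvs (Q : 'I_n -> rel (alt a b)) :
  minn (p (~: [set i])) (altv (top (Q i))) <= gmvs p Q.
Proof.
apply/bigminn_geP; split=> [|S]; first exact: leq_trans (geq_minl _ _) (p_le_b _).
have [iS | iNS] := boolP (i \in S).
  exact: leq_trans (geq_minr _ _) (leq_trans (leq_bigmax_cond _ iS) (leq_maxr _ _)).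
apply: leq_trans (geq_minl _ _) (leq_trans (p_anti _) (leq_maxl _ _)).
by apply/subsetP => j; rewrite !inE; apply: contraTneq => ->.
Qed.

Lemma gmvs_others_top (Q : 'I_n -> rel (alt a b)) x :
  p (~: [set i]) <= altv x <= p [set i] -> (forall j, j != i -> top (Q j) = x) ->
  gmvs p Q = altv x.
Proof.
move=> /andP[lo hi] Qx; apply/eqP; rewrite eqn_leq; apply/andP; split.
  apply: leq_trans (bigminn_le _ _ (~: [set i])) _.
  by rewrite geq_max lo; apply/bigmax_leqP => j; rewrite !inE => /Qx->.
apply/bigminn_geP; split=> [|S]; first exact: altv_le.
have [/p_anti pS | /subsetPn[j jS]] := boolP (S \subset [set i]).
  exact: leq_trans hi (leq_trans pS (leq_maxl _ _)).
rewrite inE => /Qx Qjx; apply: leq_trans (leq_maxr _ _).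
by rewrite -Qjx; apply: leq_bigmax_cond.
Qed.

Lemma vetoed_lt_others (x : alt a b) : altv x < p (~: [set i]) -> vetoed p i x.
Proof.
move=> x_lt; exists (top_pref ord_max); split=> [|[Q [_ Qx]]].
  exact: top_pref_strict_linear.
have := min_top_le_gmvs (fun j => if j == i then top_pref ord_max else Q j).
by rewrite Qx eqxx top_top_pref (altv_ord_max a_le_b) (minn_idPl (p_le_b _)) leqNgt x_lt.
Qed.

Lemma vetoed_gt_self (x : alt a b) : p [set i] < altv x -> vetoed p i x.
Proof.
move=> x_gt; exists (top_pref ord0); split=> [|[Q [_ Qx]]].
  exact: top_pref_strict_linear.
have := gmvs_le_max_top (fun j => if j == i then top_pref ord0 else Q j).
by rewrite Qx eqxx top_top_pref altv_ord0 (maxn_idPl (a_le_p _)) leqNgt x_gt.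
Qed.

Lemma option_set_between (Pi : rel (alt a b)) x :
  p (~: [set i]) <= altv x <= p [set i] -> option_set p i Pi x.
Proof.
move=> x_mid; exists (fun=> top_pref x); split=> [j _|].
  exact: top_pref_strict_linear.
by apply: gmvs_others_top => // j /negbTE->; apply: top_top_pref.
Qed.

Lemma vetoedP (x : alt a b) :
  vetoed p i x <-> altv x < p (~: [set i]) \/ p [set i] < altv x.
Proof.
split=> [[Pi [_ Pi_veto]] | [/vetoed_lt_others | /vetoed_gt_self] //].
case: (ltnP (altv x) (p (~: [set i]))) => [|lo]; first by left.
case: (ltnP (p [set i]) (altv x)) => [|hi]; first by right.
by case: Pi_veto; apply: option_set_between; rewrite lo.
Qed.

End VetoSet.

Theorem lemma2 (n a b : nat) (p : {set 'I_n} -> nat) (i : 'I_n) :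
  1 < n -> a < b -> monotonic_ballots a b p ->
  (p (~: [set i]) <= p [set i] ->
     forall x : alt a b,
       vetoed p i x <-> (altv x < p (~: [set i]) \/ p [set i] < altv x)) /\
  (p [set i] < p (~: [set i]) -> forall x : alt a b, vetoed p i x).
Proof.
move=> _ _ p_mono; split=> [_ x | self_lt x]; first exact: vetoedP.
apply/(vetoedP _ p_mono); case: (ltnP (altv x) (p (~: [set i]))) => [|lo]; first by left.
by right; apply: leq_trans self_lt lo.
Qed.
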